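(* Suppose the equation of state is asymptotically polytropic with $n_0=3$. Then no orbit of the system lying in the interior of the cube $(0,1)^3$ converges as $\lambda\to+\infty$ to the fixed point $P_1=(U,Q,\Omega)=(0,1/2,0)$. Consequently every orbit from the interior of the cube has $P_2=(0,1,0)$ as its $\omega$-limit.
   Context: Equation of state: $\rho=\rho(p)$ with $\rho>0$ for $p>0$, $\eta(p)=\int_0^p dp'/\rho(p')$ finite; index function $n(\eta)=\frac{\eta}{\rho}\frac{d\rho}{d\eta}$; asymptotically polytropic: $n$ is $C^1$ on $(0,\infty)$, bounded and non-negative, $n(\eta)-n_0=O(\eta^{a_0})$ as $\eta\to0$, $n(\eta)-n_1=O(\eta^{-a_1})$ as $\eta\to\infty$, $a_0,a_1>0$. The system on $[0,1]^3$ is $\frac{dU}{d\lambda}=U(1-U)[(1-Q)(3-4U)-n(\Omega)Q(1-U)]$, $\frac{dQ}{d\lambda}=Q(1-Q)[(2U-1)(1-Q)+Q(1-U)]$, $\frac{d\Omega}{d\lambda}=-a\Omega(1-\Omega)Q(1-U)$, with $0<a<\min(a_0,a_1)$ and $n(\Omega)=n(\eta)$ at $\eta=(\Omega/(1-\Omega))^{1/a}$, $n(0)=n_0$, $n(1)=n_1$. At $P_1$, for $n_0=3$, the linearization has a one-dimensional center subspace. *)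

From Stdlib Require Import Reals.
From Coquelicot Require Import Coquelicot.
Open Scope R_scope.

Definition asymptotically_polytropic (n : R -> R) (n0 n1 a0 a1 : R) : Prop :=
  0 < a0 /\ 0 < a1 /\
  (forall eta, 0 < eta -> ex_derive n eta) /\
  (forall eta, 0 < eta -> continuous (Derive n) eta) /\
  (exists M, forall eta, 0 < eta -> Rabs (n eta) <= M) /\
  (forall eta, 0 < eta -> 0 <= n eta) /\
  (exists C delta, 0 < delta /\
     forall eta, 0 < eta < delta -> Rabs (n eta - n0) <= C * Rpower eta a0) /\
  (exists C K, forall eta, K < eta -> Rabs (n eta - n1) <= C * Rpower eta (- a1)).

Definition nOmega (n : R -> R) (n0 n1 a : R) (W : R) : R :=
  if Rle_dec W 0 then n0
  else if Rle_dec 1 W then n1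
  else n (Rpower (W / (1 - W)) (1 / a)).

Definition fU (nO : R -> R) (U Q W : R) : R :=
  U * (1 - U) * ((1 - Q) * (3 - 4 * U) - nO W * Q * (1 - U)).
Definition fQ (U Q W : R) : R :=
  Q * (1 - Q) * ((2 * U - 1) * (1 - Q) + Q * (1 - U)).
Definition fW (a U Q W : R) : R :=
  - a * W * (1 - W) * Q * (1 - U).

Definition interior_orbit (nO : R -> R) (a : R) (U Q W : R -> R) : Prop :=
  forall t, 0 < t ->
    (0 < U t < 1 /\ 0 < Q t < 1 /\ 0 < W t < 1) /\
    is_derive U t (fU nO (U t) (Q t) (W t)) /\
    is_derive Q t (fQ (U t) (Q t) (W t)) /\
    is_derive W t (fW a (U t) (Q t) (W t)).

Definition converges_to (U Q W : R -> R) (p : R * R * R) : Prop :=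
  is_lim U p_infty (fst (fst p)) /\ is_lim Q p_infty (snd (fst p)) /\
  is_lim W p_infty (snd p).

Definition omega_limit (U Q W : R -> R) (p : R * R * R) : Prop :=
  exists tk : nat -> R, is_lim_seq tk p_infty /\
    is_lim_seq (fun k => U (tk k)) (fst (fst p)) /\
    is_lim_seq (fun k => Q (tk k)) (snd (fst p)) /\
    is_lim_seq (fun k => W (tk k)) (snd p).

From Stdlib Require Import Reals Lra Psatz Classical.
From Coquelicot Require Import Coquelicot.
Open Scope R_scope.

(* Write x, y, w for the logits of Q, U, W.  U never rises above
   max (U(1), 3/4), because U' < 0 when U > 3/4.  If Q ever exceeds 1/2,
   then Q increases to 1 and W, U decay exponentially: the orbit converges
   to P2.  Otherwise Q <= 1/2 forever, so x and y are bounded above.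
   For K > sup n, x + y - (K/a) w grows linearly along the orbit, hence W decays
   exponentially and, n being Hoelder-close to 3 near Omega = 0,
   |n(W) - 3| is exponentially small.  Then 5y + 12x is bounded below,
   so U stays above some u0 > 0, and 3x + y grows at least like u0 t,
   which contradicts its upper bound. *)

Lemma exp_le_compat x y : x <= y -> exp x <= exp y.
Proof. intros [Hlt|<-]; [left; apply exp_increasing|]; lra. Qed.

Lemma ge_neg_Rabs_mult_unit x s : 0 <= s <= 1 -> - Rabs x <= x * s.
Proof.
  intros Hs. pose proof (Rle_abs x). pose proof (Rle_abs (- x)).
  rewrite Rabs_Ropp in *. nra.
Qed.

Lemma derive_ge_linear_growth (F dF : R -> R) (T c : R) :
  (forall t, T <= t -> is_derive F t (dF t)) ->
  (forall t, T <= t -> c <= dF t) ->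
  forall t, T <= t -> F T + c * (t - T) <= F t.
Proof.
  intros HF Hc t Ht.
  destruct (Req_dec T t) as [<-|Hne]; [lra|].
  destruct (MVT_cor2 F dF T t) as [s [Hs Hst]]; [lra| |].
  - intros s Hs. apply is_derive_Reals, HF. lra.
  - pose proof (Hc s ltac:(lra)). nra.
Qed.

Lemma derive_ge_growth_up_to_exp (F dF : R -> R) (T c D rho : R) :
  0 <= D -> 0 < rho ->
  (forall t, T <= t -> is_derive F t (dF t)) ->
  (forall t, T <= t -> c - D * exp (- rho * t) <= dF t) ->
  forall t, T <= t -> F T + c * (t - T) - D / rho * exp (- rho * T) <= F t.
Proof.
  intros HD Hrho HF Hc.
  set (G := fun s => F s - D / rho * exp (- rho * s)).
  assert (HG : forall t, T <= t -> is_derive G t (dF t + D * exp (- rho * t))).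
  { intros t Ht.
    assert (He : is_derive (fun s => exp (- rho * s)) t (- rho * exp (- rho * t)))
      by (auto_derive; [exact I|ring]).
    assert (H := is_derive_minus _ _ t _ _ (HF t Ht) (is_derive_scal _ t (D / rho) _ He)).
    replace (dF t + D * exp (- rho * t))
      with (dF t - D / rho * (- rho * exp (- rho * t))) by (field; lra).
    exact H. }
  intros t Ht.
  pose proof (derive_ge_linear_growth G _ T c HG) as Hgrowth.
  assert (Hgt := Hgrowth ltac:(intros s Hs; pose proof (Hc s Hs); lra) t Ht).
  unfold G in Hgt. pose proof (exp_pos (- rho * t)).
  assert (0 <= D / rho * exp (- rho * t)) by (apply Rmult_le_pos; [apply Rdiv_le_0_compat|]; lra).
  lra.
Qed.

Lemma exp_decay_is_lim_0 (f df : R -> R) (T k : R) : 0 < k ->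
  (forall t, T <= t -> is_derive f t (df t)) ->
  (forall t, T <= t -> 0 < f t) ->
  (forall t, T <= t -> df t <= - k * f t) ->
  is_lim f p_infty 0.
Proof.
  intros Hk Hf Hpos Hdf.
  assert (Hln : forall t, T <= t -> ln (f t) <= ln (f T) - k * (t - T)).
  { assert (Hd : forall t, T <= t -> is_derive (fun s => - ln (f s)) t (- (df t / f t))).
    { intros t Ht. exact (is_derive_opp (fun s => ln (f s)) t _
        (is_derive_comp ln f t _ _ (is_derive_ln _ (Hpos t Ht)) (Hf t Ht))). }
    intros t Ht.
    assert (H := derive_ge_linear_growth _ _ T k Hd).
    enough (- ln (f T) + k * (t - T) <= - ln (f t)) by lra.
    apply H; [|exact Ht]. intros s Hs.
    pose proof (Hdf s Hs). pose proof (Hpos s Hs).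
    apply Rmult_le_reg_r with (f s); [lra|].
    unfold Rdiv. replace (- (df s * / f s) * f s) with (- df s) by (field; lra). lra. }
  apply is_lim_spec. intros eps.
  exists (Rmax T (T + (ln (f T) - ln eps) / k)). intros t Ht.
  pose proof (Rmax_l T (T + (ln (f T) - ln eps) / k)).
  pose proof (Rmax_r T (T + (ln (f T) - ln eps) / k)).
  pose proof (Hpos t ltac:(lra)). pose proof (Hln t ltac:(lra)).
  assert (Hk' : ln (f T) - ln eps < k * (t - T)).
  { apply Rmult_lt_reg_r with (/ k); [apply Rinv_0_lt_compat; lra|].
    replace (k * (t - T) * / k) with (t - T) by (field; lra). unfold Rdiv in *. lra. }
  rewrite Rminus_0_r, Rabs_pos_eq by lra.
  apply ln_lt_inv; [lra|apply cond_pos|lra].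
Qed.

Lemma lim_0_eventually_lt (f : R -> R) eps :
  is_lim f p_infty 0 -> 0 < eps -> exists T, forall t, T < t -> f t < eps.
Proof.
  intros Hf Heps. destruct (proj2 (is_lim_spec f p_infty 0) Hf (mkposreal eps Heps)) as [T HT].
  exists T. intros t Ht. pose proof (HT t Ht) as H. simpl in H.
  rewrite Rminus_0_r in H. apply Rabs_def2 in H. lra.
Qed.

Lemma last_time_below (f : R -> R) a b c : a <= b ->
  (forall t, a <= t <= b -> continuity_pt f t) -> f a <= c -> c < f b ->
  exists p, a <= p < b /\ f p <= c /\ forall t, p < t <= b -> c < f t.
Proof.
  intros Hab Hf Ha Hb.
  set (E := fun t => a <= t <= b /\ f t <= c).
  destruct (completeness E) as [p [Hub Hlub]].
  { exists b. intros t [Ht _]. lra. }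
  { exists a. split; [lra|exact Ha]. }
  assert (Hap : a <= p) by (apply Hub; split; [lra|exact Ha]).
  assert (Hpb : p <= b) by (apply Hlub; intros t [Ht _]; lra).
  assert (Hfp : f p <= c).
  { apply Rnot_lt_le. intros Hcp.
    destruct (Hf p ltac:(lra) (f p - c)) as [d [Hd Hnear]]; [lra|].
    (* no point of E lies in (p - d, p], so p cannot be the least upper bound *)
    assert (Hub' : is_upper_bound E (Rmax a (p - d / 2))).
    { intros t [Ht Hft]. apply Rnot_lt_le. intros Hlt.
      pose proof (Rmax_l a (p - d / 2)). pose proof (Rmax_r a (p - d / 2)).
      assert (t <= p) by (apply Hub; split; assumption).
      destruct (Req_dec t p) as [->|Htp]; [lra|].
      assert (Hdist : R_dist t p < d) by (unfold R_dist; apply Rabs_def1; lra).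
      pose proof (Hnear t (conj (conj I (not_eq_sym Htp)) Hdist)) as Hft'.
      unfold R_dist in Hft'. apply Rabs_def2 in Hft'. lra. }
    pose proof (Hlub _ Hub'). unfold Rmax in *.
    destruct (Rle_dec a (p - d / 2)); [lra|].
    assert (p = a) by lra. subst p. lra. }
  exists p. split; [split; [exact Hap|]|split; [exact Hfp|]].
  - destruct (Req_dec p b) as [->|]; lra.
  - intros t Ht. apply Rnot_le_lt. intros Hft.
    assert (t <= p) by (apply Hub; split; [lra|exact Hft]). lra.
Qed.

Lemma derive_barrier_above (f df : R -> R) a b c e : a <= b -> c < e ->
  (forall t, a <= t <= b -> is_derive f t (df t)) ->
  (forall t, a <= t <= b -> c < f t < e -> df t <= 0) ->
  f a <= c -> f b <= c.
Proof.
  intros Hab Hce Hf Hdf Ha. apply Rnot_lt_le. intros Hb.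
  assert (Hcont : forall t, a <= t <= b -> continuity_pt f t).
  { intros t Ht. apply derivable_continuous_pt. exists (df t). apply is_derive_Reals, Hf, Ht. }
  destruct (last_time_below f a b c Hab Hcont Ha Hb) as [p [Hp [Hfp Habove]]].
  destruct (Hcont p ltac:(lra) (e - c)) as [d [Hd Hnear]]; [lra|].
  set (s := Rmin b (p + d / 2)).
  assert (Hs : p < s <= b /\ s - p < d).
  { unfold s, Rmin. destruct (Rle_dec b (p + d / 2)); lra. }
  destruct (MVT_cor2 f df p s) as [x [Hx Hxs]]; [lra| |].
  { intros x Hx. apply is_derive_Reals, Hf. lra. }
  assert (Hfx : f x < e).
  { assert (Hdist : R_dist x p < d) by (unfold R_dist; apply Rabs_def1; lra).
    pose proof (Hnear x (conj (conj I (Rlt_not_eq _ _ (proj1 Hxs))) Hdist)) as H.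
    unfold R_dist in H. apply Rabs_def2 in H. lra. }
  pose proof (Hdf x ltac:(lra) (conj (Habove x ltac:(lra)) Hfx)).
  pose proof (Habove s ltac:(lra)). nra.
Qed.

Definition logit (x : R) : R := ln x - ln (1 - x).

Lemma exp_logit x : 0 < x < 1 -> exp (logit x) = x / (1 - x).
Proof.
  intros Hx. unfold logit. rewrite <- ln_div by lra. apply exp_ln.
  apply Rdiv_lt_0_compat; lra.
Qed.

Lemma logit_le x y : 0 < x -> x <= y -> y < 1 -> logit x <= logit y.
Proof.
  intros Hx Hxy Hy. unfold logit.
  pose proof (ln_le x y Hx Hxy). pose proof (ln_le (1 - y) (1 - x) ltac:(lra) ltac:(lra)). lra.
Qed.

Lemma logit_half : logit (1 / 2) = 0.
Proof. unfold logit. replace (1 - 1 / 2) with (1 / 2) by field. ring. Qed.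

Lemma logit_ge_inv x m : 0 < x < 1 -> m <= logit x -> / (1 + exp (- m)) <= x.
Proof.
  intros Hx Hm.
  assert (He : exp (- logit x) = (1 - x) / x).
  { rewrite exp_Ropp, exp_logit by exact Hx. field. lra. }
  assert (Hle : exp (- logit x) <= exp (- m)) by (apply exp_le_compat; lra).
  rewrite He in Hle.
  replace x with (/ (1 + (1 - x) / x)) by (field; lra).
  apply Rinv_le_contravar; [|lra].
  apply Rplus_lt_le_0_compat; [lra|]. apply Rdiv_le_0_compat; lra.
Qed.

Lemma is_derive_logit (f : R -> R) t g : 0 < f t < 1 ->
  is_derive f t (f t * (1 - f t) * g) -> is_derive (fun s => logit (f s)) t g.
Proof.
  intros Hft Hf.
  assert (Hl : is_derive logit (f t) (/ (f t * (1 - f t)))).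
  { unfold logit. auto_derive; [lra|]. field. lra. }
  assert (H := is_derive_comp logit f t _ _ Hl Hf).
  replace g with (f t * (1 - f t) * g * / (f t * (1 - f t))) by (field; lra).
  exact H.
Qed.

Lemma nOmega_bounded (n : R -> R) n1 a0 a1 a :
  asymptotically_polytropic n 3 n1 a0 a1 ->
  exists M, forall w, 0 < w < 1 -> 0 <= nOmega n 3 n1 a w <= M.
Proof.
  intros (_ & _ & _ & _ & [M HM] & Hnn & _).
  exists M. intros w Hw. unfold nOmega.
  destruct (Rle_dec w 0); [lra|]. destruct (Rle_dec 1 w); [lra|].
  assert (Hpos : 0 < Rpower (w / (1 - w)) (1 / a)) by apply exp_pos.
  pose proof (HM _ Hpos) as H. apply Rabs_le_between in H.
  pose proof (Hnn _ Hpos). lra.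
Qed.

(* With eta = exp (logit Omega / a), the bound O(eta^a0) on n - 3 becomes
   a bound exp (a0/a * logit Omega) as Omega -> 0. *)
Lemma nOmega_near_3 (n : R -> R) n1 a0 a1 a :
  asymptotically_polytropic n 3 n1 a0 a1 -> 0 < a ->
  exists C p L, 0 <= C /\ 0 < p /\
  forall w, 0 < w < 1 -> logit w <= L ->
    Rabs (nOmega n 3 n1 a w - 3) <= C * exp (p * logit w).
Proof.
  intros (Ha0 & _ & _ & _ & _ & _ & (C & d & Hd & HC) & _) Ha.
  exists (Rabs C), (a0 / a), (a * ln d - 1).
  split; [apply Rabs_pos|]. split; [apply Rdiv_lt_0_compat; lra|].
  intros w Hw HL. unfold nOmega.
  destruct (Rle_dec w 0); [lra|]. destruct (Rle_dec 1 w); [lra|].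
  assert (Heta : Rpower (w / (1 - w)) (1 / a) = exp (logit w / a)).
  { unfold Rpower. rewrite <- exp_logit, ln_exp by exact Hw. f_equal. field. lra. }
  rewrite Heta.
  assert (Hsmall : exp (logit w / a) < d).
  { rewrite <- (exp_ln d Hd). apply exp_increasing.
    apply Rmult_lt_reg_l with a; [lra|].
    replace (a * (logit w / a)) with (logit w) by (field; lra). lra. }
  pose proof (HC _ (conj (exp_pos _) Hsmall)) as H.
  unfold Rpower in H. rewrite ln_exp in H.
  replace (a0 * (logit w / a)) with (a0 / a * logit w) in H by (field; lra).
  eapply Rle_trans; [exact H|].
  apply Rmult_le_compat_r; [left; apply exp_pos|apply Rle_abs].
Qed.

Section InteriorOrbit.

Variables (nO : R -> R) (a M C p L : R) (U Q W : R -> R).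
Hypothesis a_pos : 0 < a.
Hypothesis n_range : forall w, 0 < w < 1 -> 0 <= nO w <= M.
Hypothesis C_ge0 : 0 <= C.
Hypothesis p_pos : 0 < p.
Hypothesis n_near_3 : forall w, 0 < w < 1 -> logit w <= L ->
  Rabs (nO w - 3) <= C * exp (p * logit w).
Hypothesis orbit : interior_orbit nO a U Q W.

Lemma orbit_range t : 0 < t -> 0 < U t < 1 /\ 0 < Q t < 1 /\ 0 < W t < 1.
Proof. intros Ht. apply (orbit t Ht). Qed.

Lemma orbit_dU t : 0 < t -> is_derive U t (fU nO (U t) (Q t) (W t)).
Proof. intros Ht. apply (orbit t Ht). Qed.

Lemma orbit_dQ t : 0 < t -> is_derive Q t (fQ (U t) (Q t) (W t)).
Proof. intros Ht. apply (orbit t Ht). Qed.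

Lemma orbit_dW t : 0 < t -> is_derive W t (fW a (U t) (Q t) (W t)).
Proof. intros Ht. apply (orbit t Ht). Qed.

Lemma fQ_decomp u q w :
  fQ u q w = q * (1 - q) * ((1 - u) * (2 * q - 1) + u * (1 - q)).
Proof. unfold fQ. ring. Qed.

Let Ub := Rmax (U 1) (3 / 4).

Lemma Ub_range : 3 / 4 <= Ub < 1.
Proof.
  pose proof (orbit_range 1 ltac:(lra)). unfold Ub, Rmax.
  destruct (Rle_dec (U 1) (3 / 4)); lra.
Qed.

Lemma U_le_Ub t : 1 <= t -> U t <= Ub.
Proof.
  intros Ht. pose proof Ub_range.
  apply (derive_barrier_above U (fun s => fU nO (U s) (Q s) (W s)) 1 t Ub 2);
    [lra|lra| |intros s Hs Hus|apply Rmax_l].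
  - intros s Hs. apply orbit_dU. lra.
  - destruct (orbit_range s ltac:(lra)) as (HU & HQ & HW).
    pose proof (n_range (W s) HW). unfold fU.
    assert (0 <= nO (W s) * Q s * (1 - U s)) by (repeat apply Rmult_le_pos; lra).
    assert ((1 - Q s) * (3 - 4 * U s) < 0) by nra.
    assert (0 < U s * (1 - U s)) by nra. nra.
Qed.

Lemma W_le_W1 t : 1 <= t -> W t <= W 1.
Proof.
  intros Ht.
  enough (- W 1 + 0 * (t - 1) <= - W t) by lra.
  apply (derive_ge_linear_growth (fun s => - W s) (fun s => - fW a (U s) (Q s) (W s)));
    [intros s Hs; exact (is_derive_opp W s _ (orbit_dW s ltac:(lra)))| |exact Ht].
  intros s Hs. destruct (orbit_range s ltac:(lra)) as (HU & HQ & HW). unfold fW.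
  assert (0 <= a * W s * (1 - W s) * Q s * (1 - U s)) by (repeat apply Rmult_le_pos; lra).
  lra.
Qed.

Lemma logit_Q_derive t : 0 < t ->
  is_derive (fun s => logit (Q s)) t ((2 * U t - 1) * (1 - Q t) + Q t * (1 - U t)).
Proof.
  intros Ht. apply is_derive_logit; [apply (orbit_range t Ht)|exact (orbit_dQ t Ht)].
Qed.

Lemma logit_U_derive t : 0 < t ->
  is_derive (fun s => logit (U s)) t
    ((1 - Q t) * (3 - 4 * U t) - nO (W t) * Q t * (1 - U t)).
Proof.
  intros Ht. apply is_derive_logit; [apply (orbit_range t Ht)|exact (orbit_dU t Ht)].
Qed.

Lemma logit_W_derive t : 0 < t ->
  is_derive (fun s => logit (W s)) t (- a * Q t * (1 - U t)).
Proof.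
  intros Ht. apply is_derive_logit; [apply (orbit_range t Ht)|].
  assert (H := orbit_dW t Ht). unfold fW in H.
  replace (- a * W t * (1 - W t) * Q t * (1 - U t))
    with (W t * (1 - W t) * (- a * Q t * (1 - U t))) in H by ring.
  exact H.
Qed.

(* n(w) >= 2 once logit w <= L2, since C exp (p L2) <= C / (C + 1) < 1. *)
Lemma n_ge_2_near_0 : exists eW, 0 < eW /\ forall w, 0 < w < 1 -> w < eW -> 2 <= nO w.
Proof.
  set (L2 := Rmin L (- ln (C + 1) / p)).
  pose proof (Rmin_l L (- ln (C + 1) / p)). pose proof (Rmin_r L (- ln (C + 1) / p)).
  exists (/ (1 + exp (- L2))).
  split; [apply Rinv_0_lt_compat; pose proof (exp_pos (- L2)); lra|].
  intros w Hw HweW.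
  assert (HwL : logit w <= L2).
  { apply Rnot_lt_le. intros Hlt. pose proof (logit_ge_inv w L2 Hw ltac:(lra)). lra. }
  assert (Hexp : exp (p * logit w) <= / (C + 1)).
  { rewrite <- (exp_ln (/ (C + 1))) by (apply Rinv_0_lt_compat; lra).
    apply exp_le_compat. rewrite ln_Rinv by lra.
    apply Rmult_le_reg_r with (/ p); [apply Rinv_0_lt_compat; lra|].
    replace (p * logit w * / p) with (logit w) by (field; lra).
    unfold L2, Rdiv in *. lra. }
  pose proof (n_near_3 w Hw ltac:(unfold L2 in *; lra)) as Hn.
  assert (C * exp (p * logit w) <= C * / (C + 1)) by (apply Rmult_le_compat_l; lra).
  assert (C * / (C + 1) < 1).
  { apply Rmult_lt_reg_r with (C + 1); [lra|]. rewrite Rmult_assoc, Rinv_l; lra. }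
  apply Rabs_le_between in Hn. lra.
Qed.

Lemma n_deviation_ge t : 0 < t ->
  - Rabs (nO (W t) - 3) <= (3 - nO (W t)) * (Q t * (1 - U t)).
Proof.
  intros Ht. destruct (orbit_range t Ht) as (HU & HQ & HW).
  rewrite <- Rabs_Ropp. replace (- (nO (W t) - 3)) with (3 - nO (W t)) by ring.
  apply ge_neg_Rabs_mult_unit. split; nra.
Qed.

Section QAboveHalf.

Variable t0 : R.
Hypothesis t0_ge1 : 1 <= t0.
Hypothesis Q_t0 : 1 / 2 < Q t0.

Lemma Q_ge_Q_t0 t : t0 <= t -> Q t0 <= Q t.
Proof.
  intros Ht.
  enough (- Q t <= - Q t0) by lra.
  apply (derive_barrier_above (fun s => - Q s) (fun s => - fQ (U s) (Q s) (W s))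
    t0 t (- Q t0) (- (1 / 2))); [lra|lra| |intros s Hs Hqs|lra].
  - intros s Hs. exact (is_derive_opp Q s _ (orbit_dQ s ltac:(lra))).
  - destruct (orbit_range s ltac:(lra)) as (HU & HQ & HW).
    rewrite fQ_decomp.
    assert (0 < (1 - U s) * (2 * Q s - 1)) by nra.
    assert (0 < U s * (1 - Q s)) by nra.
    assert (0 < Q s * (1 - Q s)) by nra. nra.
Qed.

Lemma one_minus_Q_lim : is_lim (fun t => 1 - Q t) p_infty 0.
Proof.
  pose proof Ub_range.
  apply (exp_decay_is_lim_0 _ (fun t => 0 - fQ (U t) (Q t) (W t)) t0
    (Q t0 * (1 - Ub) * (2 * Q t0 - 1))).
  - assert (0 < Q t0 * (1 - Ub)) by nra. nra.
  - intros t Ht. exact (is_derive_minus _ Q t _ _ (is_derive_const 1 t) (orbit_dQ t ltac:(lra))).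
  - intros t Ht. pose proof (orbit_range t ltac:(lra)). lra.
  - intros t Ht. destruct (orbit_range t ltac:(lra)) as (HU & HQ & HW).
    pose proof (Q_ge_Q_t0 t Ht). pose proof (U_le_Ub t ltac:(lra)).
    rewrite fQ_decomp.
    assert (Hbr : (1 - Ub) * (2 * Q t0 - 1) <= (1 - U t) * (2 * Q t - 1) + U t * (1 - Q t)).
    { assert ((1 - Ub) * (2 * Q t0 - 1) <= (1 - U t) * (2 * Q t - 1))
        by (apply Rmult_le_compat; lra).
      nra. }
    assert (Q t0 * (1 - Q t) <= Q t * (1 - Q t)) by (apply Rmult_le_compat_r; lra).
    assert (0 <= (1 - Ub) * (2 * Q t0 - 1)) by nra.
    assert (Q t0 * (1 - Q t) * ((1 - Ub) * (2 * Q t0 - 1)) <=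
      Q t * (1 - Q t) * ((1 - U t) * (2 * Q t - 1) + U t * (1 - Q t)))
      by (apply Rmult_le_compat; nra).
    nra.
Qed.

Lemma W_lim : is_lim W p_infty 0.
Proof.
  pose proof Ub_range. pose proof (orbit_range 1 ltac:(lra)) as (_ & _ & HW1).
  set (k := (1 - W 1) * (1 / 2) * (1 - Ub)).
  assert (Hk : 0 < k) by (unfold k; repeat apply Rmult_lt_0_compat; lra).
  apply (exp_decay_is_lim_0 W (fun t => fW a (U t) (Q t) (W t)) t0 (a * k)).
  - nra.
  - intros t Ht. apply orbit_dW. lra.
  - intros t Ht. pose proof (orbit_range t ltac:(lra)). lra.
  - intros t Ht. destruct (orbit_range t ltac:(lra)) as (HU & HQ & HW).
    pose proof (Q_ge_Q_t0 t Ht). pose proof (U_le_Ub t ltac:(lra)).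
    pose proof (W_le_W1 t ltac:(lra)). unfold fW.
    assert (Hprod : k <= (1 - W t) * Q t * (1 - U t)).
    { unfold k. apply Rmult_le_compat; [nra|lra| |lra].
      apply Rmult_le_compat; lra. }
    assert (0 < a * W t) by nra.
    replace (- a * W t * (1 - W t) * Q t * (1 - U t))
      with (- (a * W t) * ((1 - W t) * Q t * (1 - U t))) by ring.
    nra.
Qed.

Lemma U_lim : is_lim U p_infty 0.
Proof.
  pose proof Ub_range.
  destruct n_ge_2_near_0 as (eW & HeW & Hn2).
  destruct (lim_0_eventually_lt W eW W_lim HeW) as [T1 HT1].
  destruct (lim_0_eventually_lt _ ((1 - Ub) / 6) one_minus_Q_lim ltac:(lra)) as [T2 HT2].
  set (T3 := Rmax (Rmax T1 T2) 1 + 1).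
  assert (HT3 : 1 < T3 /\ T1 < T3 /\ T2 < T3).
  { unfold T3. pose proof (Rmax_l (Rmax T1 T2) 1). pose proof (Rmax_r (Rmax T1 T2) 1).
    pose proof (Rmax_l T1 T2). pose proof (Rmax_r T1 T2). lra. }
  apply (exp_decay_is_lim_0 U (fun t => fU nO (U t) (Q t) (W t)) T3 ((1 - Ub) * (1 - Ub))).
  - nra.
  - intros t Ht. apply orbit_dU. lra.
  - intros t Ht. pose proof (orbit_range t ltac:(lra)). lra.
  - intros t Ht. destruct (orbit_range t ltac:(lra)) as (HU & HQ & HW).
    pose proof (U_le_Ub t ltac:(lra)).
    pose proof (HT1 t ltac:(lra)). pose proof (HT2 t ltac:(lra)).
    pose proof (Hn2 (W t) HW ltac:(lra)). unfold fU.
    assert (Hbr : (1 - Q t) * (3 - 4 * U t) - nO (W t) * Q t * (1 - U t) <= - (1 - Ub)).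
    { assert ((1 - Q t) * (3 - 4 * U t) <= 3 * (1 - Q t)) by nra.
      assert (2 * Q t * (1 - Ub) <= nO (W t) * Q t * (1 - U t))
        by (apply Rmult_le_compat; nra).
      nra. }
    assert (0 < U t * (1 - U t)) by nra.
    assert (U t * (1 - U t) * ((1 - Q t) * (3 - 4 * U t) - nO (W t) * Q t * (1 - U t))
      <= U t * (1 - U t) * (- (1 - Ub))) by (apply Rmult_le_compat_l; lra).
    assert (U t * (1 - Ub) <= U t * (1 - U t)) by (apply Rmult_le_compat_l; lra).
    nra.
Qed.

End QAboveHalf.

Section QBelowHalf.

Hypothesis Q_le_half : forall t, 1 <= t -> Q t <= 1 / 2.

Lemma logit_Q_le0 t : 1 <= t -> logit (Q t) <= 0.
Proof.
  intros Ht. rewrite <- logit_half.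
  apply logit_le; [apply (orbit_range t ltac:(lra))|apply Q_le_half, Ht|lra].
Qed.

Lemma logit_U_le t : 1 <= t -> logit (U t) <= logit Ub.
Proof.
  intros Ht. pose proof Ub_range.
  apply logit_le; [apply (orbit_range t ltac:(lra))|apply U_le_Ub, Ht|lra].
Qed.

(* V = x + y - (K/a) w has V' = 2(1-U)(1-Q) + (1 + K - n) Q (1-U) >= 1 - Ub. *)
Lemma logit_W_linear_decay : exists A r, 0 < r /\ forall t, 1 <= t -> logit (W t) <= A - r * t.
Proof.
  pose proof Ub_range.
  set (K := Rabs M + 1).
  assert (HK : 0 < K) by (unfold K; pose proof (Rabs_pos M); lra).
  set (V := fun t => logit (Q t) + logit (U t) - K / a * logit (W t)).
  assert (HV : forall t, 1 <= t -> V 1 + (1 - Ub) * (t - 1) <= V t).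
  { apply derive_ge_linear_growth with (dF := fun t =>
      ((2 * U t - 1) * (1 - Q t) + Q t * (1 - U t))
      + ((1 - Q t) * (3 - 4 * U t) - nO (W t) * Q t * (1 - U t))
      - K / a * (- a * Q t * (1 - U t))).
    - intros t Ht. assert (Ht0 : 0 < t) by lra.
      exact (is_derive_minus _ _ t _ _
        (is_derive_plus _ _ t _ _ (logit_Q_derive t Ht0) (logit_U_derive t Ht0))
        (is_derive_scal _ t (K / a) _ (logit_W_derive t Ht0))).
    - intros t Ht. destruct (orbit_range t ltac:(lra)) as (HU & HQ & HW).
      pose proof (n_range (W t) HW). pose proof (Q_le_half t Ht). pose proof (U_le_Ub t Ht).
      pose proof (Rle_abs M).
      replace ((2 * U t - 1) * (1 - Q t) + Q t * (1 - U t)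
        + ((1 - Q t) * (3 - 4 * U t) - nO (W t) * Q t * (1 - U t))
        - K / a * (- a * Q t * (1 - U t)))
        with ((1 - U t) * (2 * (1 - Q t)) + (1 + K - nO (W t)) * (Q t * (1 - U t)))
        by (field; lra).
      assert (0 <= (1 + K - nO (W t)) * (Q t * (1 - U t)))
        by (apply Rmult_le_pos; [unfold K|apply Rmult_le_pos]; lra).
      assert ((1 - Ub) * 1 <= (1 - U t) * (2 * (1 - Q t))) by (apply Rmult_le_compat; lra).
      lra. }
  exists (a / K * (logit Ub - V 1 + (1 - Ub))), (a / K * (1 - Ub)).
  split; [apply Rmult_lt_0_compat; [apply Rdiv_lt_0_compat|]; lra|].
  intros t Ht. pose proof (HV t Ht). pose proof (logit_Q_le0 t Ht). pose proof (logit_U_le t Ht).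
  assert (Hw : K / a * logit (W t) <= logit Ub - V 1 - (1 - Ub) * (t - 1)) by (unfold V in *; lra).
  apply Rmult_le_compat_l with (r := a / K) in Hw; [|left; apply Rdiv_lt_0_compat; lra].
  replace (a / K * (K / a * logit (W t))) with (logit (W t)) in Hw by (field; lra).
  lra.
Qed.

Lemma n_exp_close_to_3 : exists T D rho, 1 <= T /\ 0 <= D /\ 0 < rho /\
  forall t, T <= t -> Rabs (nO (W t) - 3) <= D * exp (- rho * t).
Proof.
  destruct logit_W_linear_decay as (A & r & Hr & Hw).
  exists (Rmax 1 ((A - L) / r)), (C * exp (p * A)), (p * r).
  split; [apply Rmax_l|]. split; [pose proof (exp_pos (p * A)); nra|].
  split; [nra|]. intros t Ht.
  pose proof (Rmax_l 1 ((A - L) / r)). pose proof (Rmax_r 1 ((A - L) / r)).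
  pose proof (Hw t ltac:(lra)).
  assert (HL : A - r * t <= L).
  { assert (r * ((A - L) / r) <= r * t) by (apply Rmult_le_compat_l; lra).
    replace (r * ((A - L) / r)) with (A - L) in * by (field; lra). lra. }
  eapply Rle_trans; [apply n_near_3; [apply (orbit_range t ltac:(lra))|lra]|].
  rewrite Rmult_assoc, <- exp_plus.
  apply Rmult_le_compat_l; [exact C_ge0|]. apply exp_le_compat. nra.
Qed.

Section ExpClose.

Variables (T D rho : R).
Hypothesis T_ge1 : 1 <= T.
Hypothesis D_ge0 : 0 <= D.
Hypothesis rho_pos : 0 < rho.
Hypothesis n_close : forall t, T <= t -> Rabs (nO (W t) - 3) <= D * exp (- rho * t).

(* (5y + 12x)' = 3 (1 - 2Q) + U (4 - Q) + 5 (3 - n) Q (1 - U). *)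
Lemma U_bounded_below : exists u0, 0 < u0 /\ forall t, T <= t -> u0 <= U t.
Proof.
  set (G := fun t => 5 * logit (U t) + 12 * logit (Q t)).
  assert (HG : forall t, T <= t ->
    G T + 0 * (t - T) - 5 * D / rho * exp (- rho * T) <= G t).
  { apply derive_ge_growth_up_to_exp with (dF := fun t =>
      5 * ((1 - Q t) * (3 - 4 * U t) - nO (W t) * Q t * (1 - U t))
      + 12 * ((2 * U t - 1) * (1 - Q t) + Q t * (1 - U t))); [nra|lra| |].
    - intros t Ht. assert (Ht0 : 0 < t) by lra.
      exact (is_derive_plus _ _ t _ _ (is_derive_scal _ t 5 _ (logit_U_derive t Ht0))
        (is_derive_scal _ t 12 _ (logit_Q_derive t Ht0))).
    - intros t Ht. destruct (orbit_range t ltac:(lra)) as (HU & HQ & HW).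
      pose proof (n_close t Ht). pose proof (Q_le_half t ltac:(lra)).
      pose proof (n_deviation_ge t ltac:(lra)).
      assert (0 <= U t * (4 - Q t)) by nra.
      nra. }
  set (m := (G T - 5 * D / rho * exp (- rho * T)) / 5).
  exists (/ (1 + exp (- m))).
  split; [apply Rinv_0_lt_compat; pose proof (exp_pos (- m)); lra|].
  intros t Ht. apply logit_ge_inv; [apply (orbit_range t ltac:(lra))|].
  pose proof (HG t Ht). pose proof (logit_Q_le0 t ltac:(lra)).
  unfold m, G in *. lra.
Qed.

(* (3x + y)' = 2 U (1 - Q) + (3 - n) Q (1 - U) >= u0 - |n - 3|. *)
Lemma Q_le_half_absurd : False.
Proof.
  destruct U_bounded_below as (u0 & Hu0 & HU0).
  set (F := fun t => 3 * logit (Q t) + logit (U t)).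
  assert (HF : forall t, T <= t ->
    F T + u0 * (t - T) - D / rho * exp (- rho * T) <= F t).
  { apply derive_ge_growth_up_to_exp with (dF := fun t =>
      3 * ((2 * U t - 1) * (1 - Q t) + Q t * (1 - U t))
      + ((1 - Q t) * (3 - 4 * U t) - nO (W t) * Q t * (1 - U t))); [lra|lra| |].
    - intros t Ht. assert (Ht0 : 0 < t) by lra.
      exact (is_derive_plus _ _ t _ _ (is_derive_scal _ t 3 _ (logit_Q_derive t Ht0))
        (logit_U_derive t Ht0)).
    - intros t Ht. destruct (orbit_range t ltac:(lra)) as (HU & HQ & HW).
      pose proof (n_close t Ht). pose proof (Q_le_half t ltac:(lra)).
      pose proof (n_deviation_ge t ltac:(lra)). pose proof (HU0 t Ht).
      nra. }
  set (B := logit Ub - F T + D / rho * exp (- rho * T)).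
  set (t := Rmax T (T + B / u0) + 1).
  pose proof (Rmax_l T (T + B / u0)). pose proof (Rmax_r T (T + B / u0)).
  pose proof (HF t ltac:(unfold t; lra)).
  pose proof (logit_Q_le0 t ltac:(unfold t; lra)). pose proof (logit_U_le t ltac:(unfold t; lra)).
  assert (u0 * (B / u0) < u0 * (t - T)) by (apply Rmult_lt_compat_l; unfold t; lra).
  replace (u0 * (B / u0)) with B in * by (field; lra).
  unfold B, F in *. lra.
Qed.

End ExpClose.

End QBelowHalf.

Lemma Q_eventually_above_half : exists t0, 1 <= t0 /\ 1 / 2 < Q t0.
Proof.
  apply NNPP. intros Hnone.
  assert (HQ : forall t, 1 <= t -> Q t <= 1 / 2).
  { intros t Ht. apply Rnot_lt_le. intros HQt. apply Hnone. exists t. lra. }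
  destruct (n_exp_close_to_3 HQ) as (T & D & rho & HT & HD & Hrho & Hclose).
  exact (Q_le_half_absurd HQ T D rho HT HD Hrho Hclose).
Qed.

Lemma orbit_converges_to_P2 : converges_to U Q W (0, 1, 0).
Proof.
  destruct Q_eventually_above_half as (t0 & Ht0 & HQ0).
  split; [|split]; simpl.
  - exact (U_lim t0 Ht0 HQ0).
  - apply is_lim_spec. intros eps.
    destruct (proj2 (is_lim_spec _ _ _) (one_minus_Q_lim t0 Ht0 HQ0) eps) as [T HT].
    exists T. intros t Ht. pose proof (HT t Ht) as H.
    replace (Q t - 1) with (- (1 - Q t - 0)) by ring. rewrite Rabs_Ropp. exact H.
  - exact (W_lim t0 Ht0 HQ0).
Qed.

End InteriorOrbit.

Lemma converges_to_unique (U Q W : R -> R) p q :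
  converges_to U Q W p -> converges_to U Q W q -> p = q.
Proof.
  destruct p as [[pu pq] pw], q as [[qu qq] qw].
  intros (HUp & HQp & HWp) (HUq & HQq & HWq); simpl in *.
  assert (E : forall (f : R -> R) (l l' : R), is_lim f p_infty l -> is_lim f p_infty l' -> l = l').
  { intros f l l' Hl Hl'. apply is_lim_unique in Hl, Hl'. rewrite Hl in Hl'. congruence. }
  rewrite (E U pu qu), (E Q pq qq), (E W pw qw); auto.
Qed.

Lemma omega_limit_of_converges (U Q W : R -> R) p :
  converges_to U Q W p -> forall q, omega_limit U Q W q <-> q = p.
Proof.
  destruct p as [[pu pq] pw]. intros (HU & HQ & HW) [[qu qq] qw]; simpl in *.
  split.
  - intros (tk & Htk & HUk & HQk & HWk); simpl in *.
    assert (E : forall (f : R -> R) (l l' : R), is_lim f p_infty l ->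
      is_lim_seq (fun k => f (tk k)) l' -> l' = l).
    { intros f l l' Hl Hl'.
      assert (Hl2 := is_lim_comp_seq f tk p_infty l Hl
        ltac:(exists 0%nat; intros k _ Hk; discriminate Hk) Htk).
      apply is_lim_seq_unique in Hl', Hl2. rewrite Hl' in Hl2. congruence. }
    rewrite (E U pu qu), (E Q pq qq), (E W pw qw); auto.
  - intros Eq. injection Eq as -> -> ->.
    assert (Hev : eventually (fun k : nat => Finite (INR k) <> p_infty))
      by (exists 0%nat; intros k _ Hk; discriminate Hk).
    exists INR. repeat split; try apply is_lim_seq_INR;
      apply (is_lim_comp_seq _ INR p_infty); auto using is_lim_seq_INR.
Qed.

Theorem mainTheorem11 (n : R -> R) (n1 a0 a1 a : R)
  (Hpoly : asymptotically_polytropic n 3 n1 a0 a1)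
  (Ha : 0 < a) (Ha0 : a < a0) (Ha1 : a < a1)
  (U Q W : R -> R)
  (Horb : interior_orbit (nOmega n 3 n1 a) a U Q W) :
  ~ converges_to U Q W (0, 1/2, 0) /\
  (forall p, omega_limit U Q W p <-> p = (0, 1, 0)).
Proof.
  destruct (nOmega_bounded n n1 a0 a1 a Hpoly) as [M HM].
  destruct (nOmega_near_3 n n1 a0 a1 a Hpoly Ha) as (C & p & L & HC & Hp & Hnear).
  assert (HP2 := orbit_converges_to_P2 _ a M C p L U Q W Ha HM HC Hp Hnear Horb).
  split.
  - intros HP1. pose proof (converges_to_unique U Q W _ _ HP1 HP2) as E.
    injection E. lra.
  - exact (omega_limit_of_converges U Q W _ HP2).
Qed.
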